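(* Consider the sparse sequence model and the data-dependent measure $\Delta^n$ described in the context, with $\lambda_n = O(n^{-(a+1)})$ as $n\to\infty$ for a constant $a>0$, and with $\alpha < 2T$. Then for any sequence $M_n > 1$ with $M_n\to\infty$, \[ \sup_{\theta^\star} \mathsf{E}_{\theta^\star} \Delta^n\bigl(\{\theta\in\mathbb{R}^n : |S_\theta| > M_n |S_{\theta^\star}|\}\bigr) \to 0, \quad n\to\infty. \]
   Context: Model: one observes $Y^n=(Y_1,\ldots,Y_n)^\top$ with $Y_i = \theta_i + Z_i$, $i=1,\ldots,n$, where $\theta\in\mathbb{R}^n$ is unknown and $Z_1,\ldots,Z_n$ are iid copies of a random variable $Z$ with fully known distribution, mean zero, and subgaussian in the sense that $\mathsf{E}\exp(tZ) \le \exp(\sigma^2 t^2/2)$ for all $t\in\mathbb{R}$, for a known constant $\sigma>0$. $T>0$ denotes the upper endpoint of the interval on which the moment generating function of $(Z/\sigma)^2$ exists, i.e. $\mathsf{E} e^{t (Z/\sigma)^2}$ is finite (bounded by a constant) for $t\in(0,T]$. $\mathsf{E}_{\theta^\star}$ denotes expectation when the true mean vector is $\theta^\star$. For $\theta\in\mathbb{R}^n$, $S_\theta=\{i:\theta_i\neq 0\}$ and $|S_\theta|$ is its cardinality. Data-dependent measure: fix constants $\alpha\in(0,1)$, $\gamma>0$ and a sequence $\lambda_n\in(0,1)$. Define $\Delta^n = \bigotimes_{i=1}^n \{\phi_i\, \mathsf{N}(\mu_i,\tau_i^2) + (1-\phi_i)\,\delta_0\}$, where $\mu_i = Y_i$,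 $\tau_i^2 = \sigma^2(\alpha+\gamma)^{-1}$, and $\operatorname{logit}(\phi_i) = \operatorname{logit}(\lambda_n) + \tfrac12\log\tfrac{\gamma}{\alpha+\gamma} + \tfrac{\alpha}{2\sigma^2} Y_i^2$, with $\operatorname{logit}(p)=\log\{p/(1-p)\}$. *)

From HB Require Import structures.
From mathcomp Require Import all_boot all_order all_algebra.
From mathcomp Require Import all_classical all_reals all_analysis.
Set Implicit Arguments. Unset Strict Implicit. Unset Printing Implicit Defensive.
Import Order.TTheory GRing.Theory Num.Theory.
Import numFieldNormedType.Exports.
Local Open Scope classical_set_scope.
Local Open Scope ring_scope.

Section defs.
Variable R : realType.

Fixpoint iter_int (ms : seq (set R -> \bar R)) (f : seq R -> \bar R) : \bar R :=
  match ms with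
  | [::] => f [::]
  | m :: ms' => (\int[m]_x iter_int ms' (fun xs => f (x :: xs)))%E
  end.

(* Integral of f : R^n -> \bar R (R^n = 'I_n -> R) against the product
   measure  m 0 (x) ... (x) m (n-1), computed as an iterated integral
   (Tonelli). *)
Definition prod_integral (n : nat) (m : 'I_n -> set R -> \bar R)
    (f : ('I_n -> R) -> \bar R) : \bar R :=
  iter_int [seq m i | i <- enum 'I_n] (fun xs => f (fun i => nth 0 xs i)).

Definition prod_measure (n : nat) (m : 'I_n -> set R -> \bar R)
    (A : set ('I_n -> R)) : \bar R :=
  prod_integral m (fun x => (\1_A x)%:E).

Definition logit (p : R) : R := ln (p / (1 - p)).
Definition logistic (t : R) : R := expR t / (1 + expR t).

(* Two-component mixture  phi N(mu, tau^2) + (1 - phi) delta_0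
   (normal_prob m s has standard deviation s). *)
Definition spike_slab (phi mu tau : R) : set R -> \bar R :=
  fun A => (phi%:E * normal_prob mu tau A + (1 - phi)%R%:E * \d_(0%R : R) A)%E.

Definition phi_w (sigma alpha gamma lam y : R) : R :=
  logistic (logit lam + 2^-1 * ln (gamma / (alpha + gamma))
            + alpha / (2 * sigma ^+ 2) * y ^+ 2).

Definition tau_w (sigma alpha gamma : R) : R :=
  Num.sqrt (sigma ^+ 2 / (alpha + gamma)).

Definition Delta (n : nat) (sigma alpha gamma lam : R) (Y : 'I_n -> R) :
    set ('I_n -> R) -> \bar R :=
  prod_measure (fun i => spike_slab (phi_w sigma alpha gamma lam (Y i)) (Y i)
                                    (tau_w sigma alpha gamma)).

Definition supp_size (n : nat) (theta : 'I_n -> R) : nat :=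
  #|[set i : 'I_n | theta i != 0]|.

Definition risk (PZ : set R -> \bar R) (n : nat) (sigma alpha gamma lam Mn : R)
    (theta0 : 'I_n -> R) : \bar R :=
  prod_integral (fun _ => PZ) (fun z =>
    Delta sigma alpha gamma lam (fun i => theta0 i + z i)
      [set theta | Mn * (supp_size theta0)%:R < (supp_size theta)%:R]).

End defs.

From HB Require Import structures.
From mathcomp Require Import all_boot all_order all_algebra.
From mathcomp Require Import all_classical all_reals all_analysis.
From mathcomp Require Import measurable_realfun ring lra.
Set Implicit Arguments. Unset Strict Implicit. Unset Printing Implicit Defensive.
Import Order.TTheory GRing.Theory Num.Theory.
Import numFieldNormedType.Exports.
Local Open Scope classical_set_scope.
Local Open Scope ring_scope.

(** If |S_theta| > M |S_theta*| with M >= 1, then theta is nonzero at some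
   coordinate i outside S_theta*.  By the union bound, Delta^n of this event
   is at most the sum of the slab weights phi_i over i outside S_theta*, and
   there Y_i = Z_i.  Since logistic t <= exp t, each such phi_i is at most
   2 lambda_n exp(alpha Z_i^2 / (2 sigma^2)), whose expectation K is finite
   because alpha / 2 < T.  Hence the risk is at most 2 K n lambda_n = O(n^-a),
   uniformly in theta*. *)

Section ge0_le_integral_nonmeasurable.
Local Open Scope ereal_scope.
Context d (T : measurableType d) (R : realType).
Variable mu : {measure set T -> \bar R}.

(* Unlike [ge0_le_integral], no measurability is required, since
   [ge0_integralTE] writes both sides as suprema over simple functions; the
   inner integrals of an iterated integral are not known to be measurable. *)
Lemma ge0_le_integralT (f g : T -> \bar R) :
  (forall x, 0 <= f x) -> (forall x, f x <= g x) ->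
  \int[mu]_x f x <= \int[mu]_x g x.
Proof.
move=> f0 fg; have g0 x : 0 <= g x by exact: le_trans (f0 x) (fg x).
rewrite !ge0_integralTE//; apply: ereal_sup_le => _ [h hf <-].
by exists h => //= x; exact: le_trans (hf x) (fg x).
Qed.

End ge0_le_integral_nonmeasurable.

Lemma zip_enum_ord (T : Type) (x0 : T) n (xs : seq T) : size xs = n ->
  zip (enum 'I_n) xs = [seq (i, nth x0 xs i) | i : 'I_n <- enum 'I_n].
Proof.
move=> <-; rewrite -zip_map map_id; congr zip.
by rewrite -[LHS](mkseq_nth x0) /mkseq -val_enum_ord -map_comp.
Qed.

Lemma big_enum_ord (T : Type) (idx : T) (op : T -> T -> T) n (F : 'I_n -> T) :
  \big[op/idx]_(i <- enum 'I_n) F i = \big[op/idx]_(i < n) F i.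
Proof. by rewrite enumT [index_enum _]unlock. Qed.

Section product_integral.
Variable R : realType.
Local Open Scope ereal_scope.

Lemma iter_int_ge0 (I : Type) (mu : I -> {measure set R -> \bar R}) (s : seq I)
    (f : seq R -> \bar R) :
  (forall xs, 0 <= f xs) ->
  0 <= iter_int [seq (mu i : set R -> \bar R) | i <- s] f.
Proof.
elim: s f => [|i s IHs] f f0 /=; first exact: f0.
by apply: integral_ge0 => x _; exact: IHs.
Qed.

(* The constant [b] absorbs the terms of the coordinates already integrated
   out, which makes the induction on [s] go through. *)
Lemma iter_int_le_sum (I : Type) (mu : I -> {measure set R -> \bar R})
    (h : I -> R -> R) (s : seq I) (b : \bar R) (f : seq R -> \bar R) :
  (forall i, mu i setT = 1) -> (forall i x, (0 <= h i x)%R) ->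
  (forall i, measurable_fun setT (h i)) -> 0 <= b -> (forall xs, 0 <= f xs) ->
  (forall xs, size xs = size s ->
     f xs <= b + \sum_(p <- zip s xs) (h p.1 p.2)%:E) ->
  iter_int [seq (mu i : set R -> \bar R) | i <- s] f
    <= b + \sum_(i <- s) \int[mu i]_x (h i x)%:E.
Proof.
move=> mu1 h0 mh; elim: s b f => [|i s IHs] b f b0 f0 fb /=.
  by have := fb [::] erefl; rewrite !big_nil.
rewrite big_cons; set S := \sum_(j <- s) _.
have S0 : 0 <= S.
  by apply: sume_ge0 => j _; apply: integral_ge0 => x _; rewrite lee_fin.
have inner x :
    iter_int [seq (mu j : set R -> \bar R) | j <- s] (fun xs => f (x :: xs))
    <= (b + S) + (h i x)%:E.
  rewrite addeAC; apply: IHs => [|xs|xs sxs].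
  - by rewrite adde_ge0// lee_fin.
  - exact: f0.
  - by have := fb (x :: xs); rewrite /= sxs big_cons addeA; apply.
apply: le_trans (ge0_le_integralT (mu i) _ inner) _.
  by move=> x; apply: iter_int_ge0 => xs; exact: f0.
rewrite ge0_integralD//.
- by rewrite integral_cst// mu1 mule1 -addeA [_ + S]addeC.
- by move=> x _; exact: adde_ge0.
- by move=> x _; rewrite lee_fin.
- exact/measurable_EFinP.
Qed.

Lemma prod_integral_ge0 n (mu : 'I_n -> {measure set R -> \bar R})
    (f : ('I_n -> R) -> \bar R) :
  (forall x, 0 <= f x) -> 0 <= prod_integral (fun i => mu i) f.
Proof. by move=> f0; apply: iter_int_ge0 => xs; exact: f0. Qed.

Lemma prod_integral_le_sum n (mu : 'I_n -> {measure set R -> \bar R})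
    (P : pred 'I_n) (h : 'I_n -> R -> R) (f : ('I_n -> R) -> \bar R) :
  (forall i, mu i setT = 1) -> (forall i x, (0 <= h i x)%R) ->
  (forall i, measurable_fun setT (h i)) -> (forall x, 0 <= f x) ->
  (forall x, f x <= \sum_(i | P i) (h i (x i))%:E) ->
  prod_integral (fun i => mu i) f <= \sum_(i | P i) \int[mu i]_y (h i y)%:E.
Proof.
move=> mu1 h0 mh f0 fh.
pose hP i := if P i then h i else cst 0%R.
have hP0 i y : (0 <= hP i y)%R by rewrite /hP; case: (P i).
have mhP i : measurable_fun setT (hP i) by rewrite /hP; case: (P i).
rewrite /prod_integral.
apply: le_trans (iter_int_le_sum mu1 hP0 mhP (lexx 0) _ _) _ => [xs|xs sxs|].
- exact: f0.
- rewrite size_enum_ord in sxs.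
  rewrite add0e (zip_enum_ord 0%R sxs) big_map big_enum_ord.
  apply: le_trans (fh _) _; rewrite big_mkcond /=.
  by apply: lee_sum => i _; rewrite /hP; case: (P i) => //=; rewrite lee_fin.
- rewrite add0e big_enum_ord [leRHS]big_mkcond /=.
  apply: lee_sum => i _; rewrite /hP; case: (P i) => //=.
  by rewrite integral0.
Qed.

End product_integral.

(* [normal_prob] is a measure on [measurableTypeR R], whereas [spike_slab]
   and [iter_int] use the canonical sigma-algebra of [R]; the two
   sigma-algebras are convertible, so the instances transfer verbatim. *)
Section normal_measure.
Variables (R : realType) (mu tau : R).

Definition normal_measure : set R -> \bar R := normal_prob mu tau.

HB.instance Definition _ := isMeasure.Build _ R R normal_measure
  (@measure0 _ (measurableTypeR R) R (normal_prob mu tau))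
  (@measure_ge0 _ (measurableTypeR R) R (normal_prob mu tau))
  (@measure_semi_sigma_additive _ (measurableTypeR R) R (normal_prob mu tau)).

HB.instance Definition _ := Measure_isProbability.Build _ R R normal_measure
  (@probability_setT _ (measurableTypeR R) R (normal_prob mu tau)).

End normal_measure.

Section spike_and_slab.
Variable R : realType.
Local Open Scope ereal_scope.

Lemma measurable_neq (a : R) : measurable [set x : R | x != a].
Proof.
have -> : [set x : R | x != a] = ~` [set a] by apply/seteqP; split => x /= /eqP.
exact: measurableC.
Qed.

Lemma spike_slab_setT (phi mu tau : R) : spike_slab phi mu tau setT = 1.
Proof.
rewrite /spike_slab (probability_setT (normal_measure mu tau)) diracT.
by rewrite !mule1 -EFinD addrC subrK.
Qed.

Lemma spike_slab_neq0 (phi mu tau : R) : (0 <= phi)%R ->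
  spike_slab phi mu tau [set x | x != 0%R] <= phi%:E.
Proof.
move=> phi0; rewrite /spike_slab diracE memNset /= ?eqxx// mule0 adde0.
rewrite -[leRHS]mule1 lee_wpmul2l ?lee_fin//.
by apply: (probability_le1 (normal_measure mu tau)); exact: measurable_neq.
Qed.

Definition spike_slab_measure (phi mu tau : R) (phi0 : (0 <= phi)%R)
    (phi1 : (phi <= 1)%R) : {measure set R -> \bar R} :=
  measure_add (mscale (NngNum phi0) (normal_measure mu tau))
              (mscale (NngNum (etrans (subr_ge0 phi 1) phi1)) \d_(0%R : R)).

Lemma spike_slab_measureE phi mu tau phi0 phi1 A :
  @spike_slab_measure phi mu tau phi0 phi1 A = spike_slab phi mu tau A.
Proof. exact: measure_addE. Qed.

End spike_and_slab.

Section logistic.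
Variable R : realType.

Lemma logistic_ge0 (t : R) : 0 <= logistic t.
Proof. by rewrite /logistic divr_ge0// addr_ge0// expR_ge0. Qed.

Lemma logistic_le1 (t : R) : logistic t <= 1.
Proof.
by rewrite /logistic ler_pdivrMr ?mul1r ?lerDr// ltr_wpDr// expR_gt0.
Qed.

Lemma logistic_le_expR (t : R) : logistic t <= expR t.
Proof.
rewrite /logistic ler_pdivrMr ?ltr_wpDr// ?expR_gt0//.
by rewrite ler_peMr ?expR_ge0// lerDl expR_ge0.
Qed.

Lemma phi_w_le (sigma alpha gamma lam y : R) :
  sigma != 0 -> 0 <= alpha -> 0 < gamma -> 0 < lam <= 2^-1 ->
  phi_w sigma alpha gamma lam y
    <= 2 * lam * expR (alpha / 2 * (y / sigma) ^+ 2).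
Proof.
move=> s0 a0 g0 /andP[l0 l2]; apply: le_trans (logistic_le_expR _) _.
have -> : alpha / (2 * sigma ^+ 2) * y ^+ 2 = alpha / 2 * (y / sigma) ^+ 2.
  by field.
rewrite !expRD ler_wpM2r ?expR_ge0//.
have odds : expR (logit lam) <= 2 * lam.
  rewrite /logit lnK ?posrE ?divr_gt0 ?subr_gt0//; last lra.
  by rewrite ler_pdivrMr ?subr_gt0; [nra | lra].
have shrink : expR (2^-1 * ln (gamma / (alpha + gamma))) <= 1.
  rewrite expR_le1 mulr_ge0_le0 ?invr_ge0// ln_le0//.
  by rewrite ler_pdivrMr ?mul1r ?lerDr// ltr_wpDl.
by rewrite -[leRHS]mulr1 ler_pM ?expR_ge0.
Qed.

End logistic.

Section posterior_support.
Variable R : realType.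
Local Open Scope ereal_scope.

Lemma supp_size_le n (theta0 theta : 'I_n -> R) :
  (forall i, theta0 i = 0%R -> theta i = 0%R) ->
  (supp_size theta <= supp_size theta0)%N.
Proof.
move=> sub; apply: subset_leq_card; apply/fintype.subsetP => i.
by rewrite !inE; apply: contraNN => /eqP/sub ->.
Qed.

Lemma indic_supp_size_gt_le n (Mn : R) (theta0 theta : 'I_n -> R) :
  (1 <= Mn)%R ->
  (\1_[set th | (Mn * (supp_size theta0)%:R < (supp_size th)%:R)%R] theta
    : R)%:E
  <= \sum_(i | theta0 i == 0%R) (\1_[set x | x != 0%R] (theta i) : R)%:E.
Proof.
move=> M1; rewrite indicE; case: (boolP (_ \in _)) => [|_]; last first.
  by apply: sume_ge0 => i _; rewrite lee_fin.
rewrite inE /= => Sgt.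
have [i /andP[/eqP th0i thi]] : exists i, (theta0 i == 0%R) && (theta i != 0%R).
  apply/existsP; apply: contraLR Sgt.
  rewrite negb_exists -leNgt => /forallP none.
  apply: le_trans (ler_peMl _ M1) => //; rewrite ler_nat.
  apply: supp_size_le => i th0i.
  by have := none i; rewrite th0i eqxx /= negbK => /eqP.
rewrite (bigD1 i) ?th0i//= indicE mem_set// leeDl//.
by apply: sume_ge0 => j _; rewrite lee_fin.
Qed.

Section Delta.
Variables (sigma alpha gamma lam : R).

Definition Delta_factor (y : R) : {measure set R -> \bar R} :=
  @spike_slab_measure R (phi_w sigma alpha gamma lam y) y
    (tau_w sigma alpha gamma) (logistic_ge0 _) (logistic_le1 _).

Lemma DeltaE n (Y : 'I_n -> R) A :
  Delta sigma alpha gamma lam Y A =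
  prod_integral (fun i => Delta_factor (Y i)) (fun th => (\1_A th)%:E).
Proof.
rewrite /Delta /prod_measure /prod_integral; congr iter_int.
by apply: eq_map => i; apply/funext => B; rewrite spike_slab_measureE.
Qed.

Lemma Delta_ge0 n (Y : 'I_n -> R) A : 0 <= Delta sigma alpha gamma lam Y A.
Proof. by rewrite DeltaE; apply: prod_integral_ge0 => th; rewrite lee_fin. Qed.

Lemma Delta_supp_size_gt_le n (Mn : R) (theta0 Y : 'I_n -> R) : (1 <= Mn)%R ->
  Delta sigma alpha gamma lam Y
    [set th | (Mn * (supp_size theta0)%:R < (supp_size th)%:R)%R]
  <= (\sum_(i | theta0 i == 0%R) phi_w sigma alpha gamma lam (Y i))%:E.
Proof.
move=> M1; rewrite DeltaE -sumEFin.
apply: le_trans (prod_integral_le_sum (P := fun i => theta0 i == 0%R)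
  (h := fun=> \1_[set x | x != 0%R]) _ _ _ _ _) _ => [i|i x|i|th|th|].
- by rewrite spike_slab_measureE spike_slab_setT.
- by rewrite indicE.
- by apply: measurable_indic; exact: measurable_neq.
- by rewrite lee_fin.
- exact: indic_supp_size_gt_le.
apply: lee_sum => i _.
rewrite integral_indic ?setIT//; last exact: measurable_neq.
by rewrite spike_slab_measureE spike_slab_neq0//; exact: logistic_ge0.
Qed.

End Delta.

Lemma risk_le (PZ : probability R R) n (sigma alpha gamma lam Mn : R)
    (theta0 : 'I_n -> R) (g : R -> R) :
  (1 <= Mn)%R -> measurable_fun setT g ->
  (forall y, phi_w sigma alpha gamma lam y <= g y)%R ->
  risk PZ sigma alpha gamma lam Mn theta0 <= n%:R%:E * \int[PZ]_z (g z)%:E.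
Proof.
move=> M1 mg phig.
have g0 y : (0 <= g y)%R := le_trans (logistic_ge0 _) (phig y).
apply: le_trans (prod_integral_le_sum (P := fun i => theta0 i == 0%R)
  (h := fun=> g) _ _ _ _ _) _ => [i|i y|i|z|z|].
- exact: probability_setT.
- exact: g0.
- exact: mg.
- exact: Delta_ge0.
- apply: le_trans (Delta_supp_size_gt_le _ _ _ _ _ _ M1) _.
  rewrite -sumEFin; apply: lee_sum => i /eqP th0i.
  by rewrite th0i add0r lee_fin.
- have -> : n%:R%:E * \int[PZ]_z (g z)%:E = \sum_(i < n) \int[PZ]_z (g z)%:E.
    by rewrite sumr_const card_ord mule_natl.
  apply: lee_sum_nneg_subset => // i _.
  by apply: integral_ge0 => y _; rewrite lee_fin.
Qed.

Lemma risk_ge0 (PZ : probability R R) n (sigma alpha gamma lam Mn : R)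
    (theta0 : 'I_n -> R) : 0 <= risk PZ sigma alpha gamma lam Mn theta0.
Proof. by apply: prod_integral_ge0 => z; exact: Delta_ge0. Qed.

End posterior_support.

Section asymptotics.
Variable R : realType.

Lemma natr_powRN_cvg0 (p : R) :
  0 < p -> (fun n : nat => n%:R `^ (- p)) @ \oo --> 0.
Proof.
move=> p0; apply/cvgr0Pnorm_lt => e e0; near=> n.
have rn : (e^-1) `^ (p^-1) < n%:R by near: n; apply: nbhs_infty_gtr.
have n0 : 0 < n%:R :> R by apply: le_lt_trans rn; exact: powR_ge0.
rewrite ger0_norm ?powR_ge0// powRN -[e]invrK.
rewrite ltf_pV2 ?posrE ?powR_gt0 ?invr_gt0//.
have <- : ((e^-1) `^ (p^-1)) `^ p = e^-1.
  by rewrite -powRrM mulVf ?gt_eqF// powRr1// ltW// invr_gt0.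
by apply: gt0_ltr_powR => //; rewrite nnegrE ?powR_ge0 ?ler0n.
Unshelve. all: end_near.
Qed.

Lemma nat_mul_cvg0 (u : nat -> R) (C a : R) (N : nat) : 0 < a ->
  (forall n, 0 <= u n) ->
  (forall n, (N <= n)%N -> u n <= C * n%:R `^ (- (a + 1))) ->
  (fun n => n%:R * u n) @ \oo --> 0.
Proof.
move=> a0 u0 uC.
have Cna : (fun n : nat => C * n%:R `^ (- a)) @ \oo --> 0.
  by rewrite -(mulr0 C); apply: cvgM; [exact: cvg_cst | exact: natr_powRN_cvg0].
apply: (squeeze_cvgr _ (cvg_cst 0) Cna); near=> n.
rewrite mulr_ge0 ?u0//=.
have nN : (N <= n)%N by near: n; apply: nbhs_infty_ge.
have n0 : n%:R != 0 :> R.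
  by rewrite pnatr_eq0 -lt0n; near: n; exact: nbhs_infty_gt.
have -> : C * n%:R `^ (- a) = n%:R * (C * n%:R `^ (- (a + 1))).
  rewrite opprD powRD ?n0 ?implybT// powR_inv1 ?ler0n//; by field.
by rewrite ler_wpM2l ?uC.
Unshelve. all: end_near.
Qed.

End asymptotics.

Lemma sup_risk_le (R : realType) (PZ : probability R R) n
    (sigma alpha gamma lam Mn K : R) :
  0 < sigma -> 0 <= alpha -> 0 < gamma -> 0 < lam <= 2^-1 -> 1 <= Mn ->
  (\int[PZ]_z (expR (alpha / 2 * (z / sigma) ^+ 2))%:E = K%:E)%E ->
  (ereal_sup [set risk PZ sigma alpha gamma lam Mn theta0
             | theta0 in [set: 'I_n -> R]]
   <= (2 * K * (n%:R * lam))%:E)%E.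
Proof.
move=> s0 a0 g0 lam12 M1 KE; apply: ge_ereal_sup => _ [theta0 _ <-].
have [lam0 _] := andP lam12.
pose e z := expR (alpha / 2 * (z / sigma) ^+ 2).
have me : measurable_fun setT e.
  apply: measurableT_comp => //; apply: measurable_funM => //.
  by apply: measurable_funX; exact: measurable_funM.
have mg : measurable_fun setT (fun z => 2 * lam * e z).
  exact: measurable_funM.
apply: le_trans (risk_le PZ theta0 M1 mg _) _ => [y|].
  exact: phi_w_le (lt0r_neq0 s0) a0 g0 lam12.
under eq_integral do rewrite EFinM.
rewrite ge0_integralZl_EFin ?mulr_ge0 ?(ltW lam0)//.
- rewrite KE -!EFinM lee_fin.
  by have -> : n%:R * (2 * lam * K) = 2 * K * (n%:R * lam) by ring.
- by move=> z _; rewrite lee_fin expR_ge0.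
- exact/measurable_EFinP.
Qed.

Theorem theorem3 (R : realType) (PZ : probability R R) (sigma T alpha gamma a : R)
  (lambda M : nat -> R) :
  (* noise: mean zero, sigma-subgaussian, mgf of (Z/sigma)^2 finite on (0,T] *)
  0 < sigma ->
  PZ.-integrable setT (fun z => z%:E) ->
  (\int[PZ]_z z%:E = 0)%E ->
  (forall t : R, (\int[PZ]_z (expR (t * z))%:E <= (expR (sigma ^+ 2 * t ^+ 2 / 2))%:E)%E) ->
  0 < T ->
  (forall t : R, 0 < t <= T ->
     (\int[PZ]_z (expR (t * (z / sigma) ^+ 2))%:E < +oo)%E) ->
  (* parameters of Delta^n *)
  0 < alpha < 1 -> 0 < gamma ->
  (forall n, 0 < lambda n < 1) ->
  (* lambda_n = O(n^-(a+1)) *)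
  0 < a ->
  (exists C : R, exists N : nat, forall n : nat, (N <= n)%N ->
     lambda n <= C * n%:R `^ (- (a + 1))) ->
  alpha < 2 * T ->
  (* M_n > 1, M_n -> oo *)
  (forall n, 1 < M n) ->
  M @ \oo --> +oo ->
  (fun n => ereal_sup [set risk PZ sigma alpha gamma (lambda n) (M n) theta0
                       | theta0 in [set: 'I_n -> R]]) @ \oo --> 0%E.
Proof.
move=> s0 _ _ _ _ mgfT /andP[a0 _] g0 lam01 a_gt0 [C [N lamC]] aT M1 _.
pose Kint := (\int[PZ]_z (expR (alpha / 2 * (z / sigma) ^+ 2))%:E)%E.
have Kfin : (Kint < +oo)%E by apply: mgfT; apply/andP; split; lra.
have K0 : (0 <= Kint)%E by apply: integral_ge0 => z _; rewrite lee_fin expR_ge0.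
pose K := fine Kint.
have KE : Kint = K%:E by rewrite fineK// ge0_fin_numE.
have lam0 n : 0 <= lambda n by case/andP: (lam01 n) => /ltW.
have nlam0 := nat_mul_cvg0 a_gt0 lam0 lamC.
have lam12 : \forall n \near \oo, 0 < lambda n <= 2^-1.
  near=> n; rewrite (andP (lam01 n)).1 /=.
  apply: le_trans (_ : lambda n <= n%:R * lambda n) _.
    by rewrite ler_peMl// ler1n; near: n; exact: nbhs_infty_gt.
  by near: n; apply: (cvgr_le _ nlam0); rewrite invr_gt0.
apply: (squeeze_cvge (f := fun=> 0%E)
  (h := fun n => (2 * K * (n%:R * lambda n))%:E)); last 2 first.
- exact: cvg_cst.
- apply: cvg_EFin; first exact: nearW.
  by rewrite -(mulr0 (2 * K)); exact: cvgMr.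
near=> n; apply/andP; split.
- apply: le_trans (risk_ge0 PZ _ _ _ _ _ (fun=> 0%R)) (ereal_sup_ubound _).
  by exists (fun=> 0%R).
- apply: sup_risk_le (ltW (M1 n)) _ => //; first exact: ltW.
  by near: n.
Unshelve. all: end_near.
Qed.
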